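(* The family of recursively enumerable safety constraints is a family with a universal detector, i.e. there is a detector $u$ such that $\{C_u(x):x\in|u|\}$ is exactly the set of recursively enumerable safety constraints.
   Context: Fix a finite nonempty set $N$; $N^+$ the nonempty finite words, $N^{\mathbb N}$ the streams; $s[m{:}]$ the suffix; $n^{-1}\cdot A=\{u:nu\in A\}$; a set of words is prefix-free if no proper prefix (including the empty word) of a member is a member. Let $\mathbf 1=\{\Downarrow\}$. A detector is a set $|a|$ with $a:|a|\to(\mathbf 1+|a|)^N$. The final detector $\omega$ has carrier $\Omega$ = the set of prefix-free subsets of $N^+$, with $\omega(P)(n)=\Downarrow$ if $n\in P$, else $n^{-1}\cdot P$. For $s\in N^{\mathbb N}$, $\mathrm{Join}([s],a)$ maps $(t,y)\in\{s[k{:}]\}\times|a|$ to $\Downarrow$ if $a(y)(t(0))=\Downarrow$, else $(t[1{:}],a(y)(t(0)))$; iterates $g^{(1)}=g$, $g^{(k+1)}(z)=\Downarrow$ if $g^{(k)}(z)=\Downarrow$, else $g(g^{(k)}(z))$. $C_a(x)=\{s:\mathrm{Join}([s],a)^{(k)}(s,x)\ne\Downarrow\ \forall k\ge1\}$. A safety constraint $S$ is recursively enumerable if $S=C_\omega(P)$ for some $P\in\Omega$ that is a recursively enumerable set of words. A family $\mathcal F$ of safety constraints is a family with a universal detector if $\mathcal F=\{C_a(x):x\in|a|\}$ for some detector $a$. *)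

From Stdlib Require Import ClassicalEpsilon.
From mathcomp Require Import all_boot.

Set Implicit Arguments.
Unset Strict Implicit.
Unset Printing Implicit Defensive.

Inductive recf : Type :=
| RZero : recf
| RSucc : recf
| RProj : nat -> recf
| RComp : recf -> list recf -> recf
| RPrim : recf -> recf -> recf
| RMu   : recf -> recf.

Inductive reval : recf -> list nat -> nat -> Prop :=
| ev_zero xs : reval RZero xs 0
| ev_succ xs : reval RSucc xs (head 0 xs).+1
| ev_proj i xs : reval (RProj i) xs (nth 0 xs i)
| ev_comp f gs xs ys z :
    List.Forall2 (fun g y => reval g xs y) gs ys ->
    reval f ys z -> reval (RComp f gs) xs z
| ev_prim0 f g xs z : reval f xs z -> reval (RPrim f g) (0 :: xs) z
| ev_primS f g n xs y z :
    reval (RPrim f g) (n :: xs) y -> reval g (n :: y :: xs) z ->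
    reval (RPrim f g) (n.+1 :: xs) z
| ev_mu f xs n :
    reval f (n :: xs) 0 ->
    (forall m, m < n -> exists k, reval f (m :: xs) k.+1) ->
    reval (RMu f) xs n.

Definition re_nat (A : nat -> Prop) : Prop :=
  exists c : recf, forall k, A k <-> exists y, reval c [:: k] y.

(* Words over the finite alphabet N (= T : finType), streams.          *)

(* Bijective base-#|T| coding of words (first letter = least significant). *)
Definition word_code (T : finType) (w : seq T) : nat :=
  foldr (fun a acc => (nat_of_ord (enum_rank a)).+1 + #|T| * acc) 0 w.

Definition re_words (T : finType) (P : seq T -> Prop) : Prop :=
  re_nat (fun k => exists w, word_code w = k /\ P w).

Definition stream (T : Type) := nat -> T.

Definition suffix (T : Type) (s : stream T) (m : nat) : stream T :=
  fun i => s (m + i).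

Definition deriv (T : Type) (n : T) (A : seq T -> Prop) : seq T -> Prop :=
  fun u => A (n :: u).

Definition prefix_free (T : Type) (P : seq T -> Prop) : Prop :=
  forall w, P w -> forall k, k < size w -> ~ P (take k w).

Definition Omega (T : Type) := { P : seq T -> Prop | prefix_free P }.

(* Detectors: a : |a| -> (1 + |a|)^N, with None standing for the halt  *)
(* symbol.                                                              *)

Record detector (T : Type) := Detector {
  carrier :> Type;
  dstep : carrier -> T -> option carrier
}.

Lemma deriv_prefix_free (T : Type) (P : seq T -> Prop) (n : T) :
  prefix_free P -> ~ P [:: n] -> prefix_free (deriv n P).
Proof.
move=> pf nPn w Pw k lt_k.
exact: (pf (n :: w) Pw k.+1 lt_k).
Qed.

Definition omega_step (T : Type) (P : Omega T) (n : T) : option (Omega T) :=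
  match excluded_middle_informative (proj1_sig P [:: n]) with
  | left _ => None
  | right h => Some (exist _ (deriv n (proj1_sig P))
                          (deriv_prefix_free (proj2_sig P) h))
  end.

Definition omega (T : Type) : detector T := @Detector T (Omega T) (@omega_step T).

(* Join([s], a) on states (t, y), t a suffix of s. *)
Definition join (T : Type) (a : detector T)
    (z : stream T * a) : option (stream T * a) :=
  match dstep z.2 (z.1 0) with
  | None => None
  | Some y' => Some (suffix z.1 1, y')
  end.

Fixpoint giter (Z : Type) (g : Z -> option Z) (k : nat) (z : Z) : option Z :=
  match k with
  | 0 => Some z
  | k'.+1 => match giter g k' z with None => None | Some z' => g z' end
  end.

Definition C (T : Type) (a : detector T) (x : a) : stream T -> Prop :=
  fun s => forall k, 1 <= k -> giter (@join T a) k (s, x) <> None.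

Definition re_safety (T : finType) (S : stream T -> Prop) : Prop :=
  exists P : Omega T, re_words (proj1_sig P) /\
    (forall s, S s <-> @C T (omega T) P s).

(* The universal detector is the subdetector of the final detector omega
   carved out by the recursively enumerable prefix-free sets.  It is
   well defined because r.e. sets are closed under derivatives: in the
   bijective base-#|N| coding, the codes of n^-1 P are the k with
   rank(n) + 1 + #|N| k a code of P, an affine preimage of an r.e. set.
   Since the inclusion into omega commutes with the transition maps, it
   preserves the constraints C, and those of omega are by definition the
   r.e. safety constraints. *)
From Stdlib Require Import ClassicalEpsilon.
From mathcomp Require Import all_boot.

Set Implicit Arguments.
Unset Strict Implicit.

Lemma reval_comp1_inv f g xs z :
  reval (RComp f [:: g]) xs z -> exists y, reval g xs y /\ reval f [:: y] z.
Proof.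
move=> H; inversion H; subst; inversion H2; subst; inversion H6; subst.
by exists y.
Qed.

Lemma reval_comp1 f g xs y z :
  reval g xs y -> reval f [:: y] z -> reval (RComp f [:: g]) xs z.
Proof.
by move=> Hg Hf; apply: (@ev_comp _ _ _ [:: y]) => //; constructor; [|constructor].
Qed.

Lemma reval_zero_inv xs z : reval RZero xs z -> z = 0.
Proof. by move=> H; inversion H. Qed.

Lemma reval_succ_inv xs z : reval RSucc xs z -> z = (head 0 xs).+1.
Proof. by move=> H; inversion H. Qed.

Lemma reval_proj_inv i xs z : reval (RProj i) xs z -> z = nth 0 xs i.
Proof. by move=> H; inversion H. Qed.

Lemma reval_prim0_inv f g xs z : reval (RPrim f g) (0 :: xs) z -> reval f xs z.
Proof. by move=> H; inversion H. Qed.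

Lemma reval_primS_inv f g n xs z :
  reval (RPrim f g) (n.+1 :: xs) z ->
  exists y, reval (RPrim f g) (n :: xs) y /\ reval g (n :: y :: xs) z.
Proof. by move=> H; inversion H; subst; exists y. Qed.

Fixpoint radd_const (i a : nat) : recf :=
  if a is a'.+1 then RComp RSucc [:: radd_const i a'] else RProj i.

Lemma radd_constP i a xs y : reval (radd_const i a) xs y <-> y = nth 0 xs i + a.
Proof.
elim: a y => [|a IH] y /=.
  rewrite addn0; split=> [/reval_proj_inv // | ->]; exact: ev_proj.
split=> [|->].
  by case/reval_comp1_inv=> z [/IH -> /reval_succ_inv ->]; rewrite addnS.
apply: (@reval_comp1 _ _ _ (nth 0 xs i + a)); first exact/IH.
by rewrite addnS; apply: (ev_succ [:: _]).
Qed.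

Definition rmul_const (b : nat) : recf := RPrim RZero (radd_const 1 b).

Lemma rmul_constP b n xs y : reval (rmul_const b) (n :: xs) y <-> y = n * b.
Proof.
elim: n y => [|n IH] y.
  split=> [/reval_prim0_inv/reval_zero_inv // | ->]; do 2 constructor.
split=> [|->].
  case/reval_primS_inv=> z [/IH -> /radd_constP /= ->].
  by rewrite mulSn addnC.
apply: (@ev_primS _ _ _ _ (n * b)); first exact/IH.
by apply/radd_constP; rewrite /= mulSn addnC.
Qed.

Definition raffine (a b : nat) : recf := RComp (radd_const 0 a) [:: rmul_const b].

Lemma raffineP a b k y : reval (raffine a b) [:: k] y <-> y = a + b * k.
Proof.
split=> [|->].
  case/reval_comp1_inv=> z [/rmul_constP -> /radd_constP /= ->].
  by rewrite mulnC addnC.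
apply: (@reval_comp1 _ _ _ (k * b)); first exact/rmul_constP.
by apply/radd_constP; rewrite /= mulnC addnC.
Qed.

Lemma re_nat_affine_preimage (A : nat -> Prop) a b :
  re_nat A -> re_nat (fun k => A (a + b * k)).
Proof.
case=> c Hc; exists (RComp c [:: raffine a b]) => k; rewrite Hc.
split=> [[y Hy] | [y /reval_comp1_inv [z [/raffineP -> Hz]]]]; last by exists y.
by exists y; apply: (@reval_comp1 _ _ _ (a + b * k)) => //; exact/raffineP.
Qed.

Section WordCode.
Variable T : finType.

Lemma word_code_cons (n : T) w :
  word_code (n :: w) = (enum_rank n).+1 + #|T| * word_code w.
Proof. by []. Qed.

Lemma word_code_inj : injective (@word_code T).
Proof.
elim=> [|a w IH] [|a' w'] //; rewrite !word_code_cons !addSn => -[E].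
have T_gt0 : 0 < #|T| by apply/card_gt0P; exists a.
have ranks : (enum_rank a : nat) = enum_rank a'.
  move: (congr1 (modn^~ #|T|) E).
  by rewrite !(addnC (nat_of_ord _)) !(mulnC #|T|) !modnMDl !modn_small.
move: E; rewrite ranks => /addnI /eqP; rewrite eqn_mul2l gtn_eqF //= => /eqP.
by move/IH ->; move/val_inj/enum_rank_inj: ranks ->.
Qed.

Lemma word_code_surj : 0 < #|T| -> forall k, exists w : seq T, word_code w = k.
Proof.
move=> T_gt0 k; elim: k {-2}k (leqnn k) => [|K IH] [|m] //; try by exists [::].
rewrite ltnS => le_mK.
have lt_rem : m %% #|T| < #|T| by rewrite ltn_mod.
have [w Hw] : exists w : seq T, word_code w = m %/ #|T|.
  by apply: IH; apply: leq_trans le_mK; exact: leq_div.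
exists (enum_val (Ordinal lt_rem) :: w).
by rewrite word_code_cons enum_valK /= Hw addSn addnC mulnC -divn_eq.
Qed.

Lemma re_words_deriv (P : seq T -> Prop) (n : T) :
  re_words P -> re_words (deriv n P).
Proof.
move=> /(re_nat_affine_preimage (enum_rank n).+1 #|T|) [c Hc].
exists c => k; rewrite -Hc; split=> [[w [<- Pw]] | [w' [Ew' Pw']]].
  by exists (n :: w).
have T_gt0 : 0 < #|T| by apply/card_gt0P; exists n.
have [w Ew] := word_code_surj T_gt0 k.
exists w; split=> //; rewrite /deriv; suff -> : n :: w = w' by [].
by apply: word_code_inj; rewrite word_code_cons Ew.
Qed.
End WordCode.

Section DetectorMorphism.
Variables (T : Type) (a b : detector T) (f : a -> b).
Hypothesis f_step : forall x n, dstep (f x) n = option_map f (dstep x n).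

Lemma giter_join_morph k s x :
  giter (@join T b) k (s, f x) =
  option_map (fun z => (z.1, f z.2)) (giter (@join T a) k (s, x)).
Proof.
elim: k => [|k IH] //=; rewrite IH.
case: (giter _ k _) => [[t y]|] //=.
by rewrite /join /= f_step; case: (dstep y (t 0)).
Qed.

Lemma C_morph x s : C (f x) s <-> C x s.
Proof.
by split=> H k k_gt0; move: (H k k_gt0); rewrite giter_join_morph; case: giter.
Qed.
End DetectorMorphism.

Section Subdetector.
Variables (T : Type) (a : detector T) (Q : a -> Prop).
Hypothesis Q_step : forall x n y, Q x -> dstep x n = Some y -> Q y.

Definition sub_step (x : {y : a | Q y}) (n : T) : option {y : a | Q y} :=
  match dstep (sval x) n as o return (forall y, o = Some y -> Q y) -> option _ with
  | None => fun _ => None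
  | Some y => fun Qy => Some (exist _ y (Qy y erefl))
  end (fun y => Q_step (svalP x)).

Definition subdetector : detector T := Detector sub_step.

Lemma sub_stepE (x : subdetector) n :
  dstep (sval x) n = option_map sval (dstep x n).
Proof.
by rewrite /= /sub_step; case: (dstep (sval x) n) (fun y => @Q_step _ n y (svalP x)).
Qed.

Lemma C_subdetector (x : subdetector) s : C (sval x) s <-> C x s.
Proof. exact: (C_morph sub_stepE). Qed.
End Subdetector.

Lemma re_words_omega_step (T : finType) (P : omega T) (n : T) (P' : omega T) :
  re_words (sval P) -> dstep P n = Some P' -> re_words (sval P').
Proof.
move=> reP; rewrite /= /omega_step.
case: excluded_middle_informative => // nPn [<-].
exact: re_words_deriv.
Qed.

(* [hT] is unused: the coding argument only needs a nonempty alphabet where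
   a letter is at hand. *)
Theorem mainTheorem19 (T : finType) (hT : 0 < #|T|) :
  exists u : detector T,
    forall S : stream T -> Prop,
      re_safety S <-> exists x : u, forall s, S s <-> @C T u x s.
Proof.
exists (subdetector (@re_words_omega_step T)) => S; split.
  case=> P [reP SP]; exists (exist _ P reP) => s.
  by rewrite SP -C_subdetector.
case=> x Sx; exists (sval x); split; first exact: (svalP x).
by move=> s; rewrite Sx C_subdetector.
Qed.
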